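(* Let $G$ be a dense $K_4^3\cup e$-free $3$-graph with $\lambda(G)>\frac{\sqrt3}{18}$. Then $G$ is $X_3$-free.
   Context: $K_4^3\cup e$ is the $3$-graph on $\{1,\dots,7\}$ with edges $\{123,124,134,234,567\}$. For a $3$-graph $G$ on $[n]$, $\lambda(G)=\max\{\sum_{e\in E(G)}\prod_{i\in e}x_i:\sum_ix_i=1,x_i\ge0\}$. An $r$-graph $G$ is dense if $\lambda(G')<\lambda(G)$ for every proper subgraph $G'$ of $G$. $X_i$ is the $3$-graph on $[2i+2]$ in which $\{1,2,2j+1,2j+2\}$ spans a $K_4^3$ for each $1\le j\le i$, and no other edges. *)

From HB Require Import structures.
From mathcomp Require Import all_boot all_order all_algebra.
From mathcomp Require Import classical_sets reals.
Set Implicit Arguments. Unset Strict Implicit. Unset Printing Implicit Defensive.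
Import Order.TTheory GRing.Theory Num.Theory.
Local Open Scope ring_scope.

Definition uniform3 (n : nat) (E : {set {set 'I_n}}) : Prop :=
  forall e, e \in E -> #|e| = 3%N.

Local Open Scope classical_set_scope.
Definition lagr (R : realType) (n : nat) (V : {set 'I_n}) (E : {set {set 'I_n}}) : R :=
  sup [set s : R | exists x : 'I_n -> R,
        (forall i, 0 <= x i) /\ (forall i, i \notin V -> x i = 0) /\
        (\sum_i x i = 1) /\ s = \sum_(e in E) \prod_(i in e) x i].

Local Close Scope classical_set_scope.
Definition lambda (R : realType) (n : nat) (E : {set {set 'I_n}}) : R :=
  lagr R [set: 'I_n]%SET E.

Definition subgraph (n : nat) (E : {set {set 'I_n}}) (V : {set 'I_n})
  (E' : {set {set 'I_n}}) : Prop :=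
  E' \subset E /\ (forall e, e \in E' -> e \subset V).

Definition dense (R : realType) (n : nat) (E : {set {set 'I_n}}) : Prop :=
  forall V E', subgraph E V E' -> ~ (V = [set: 'I_n]%SET /\ E' = E) ->
    lagr R V E' < lambda R E.

Definition contains (n k : nat) (E : {set {set 'I_n}}) (F : seq {set 'I_k}) : Prop :=
  exists f : 'I_k -> 'I_n, injective f /\ forall e, e \in F -> f @: e \in E.

Definition hfree (n k : nat) (E : {set {set 'I_n}}) (F : seq {set 'I_k}) : Prop :=
  ~ contains E F.

Definition tri (k a b c : nat) : {set 'I_k.+1} := [set inord a; inord b; inord c].

(* K_4^3 u e on {1..7} (0-indexed: {0..6}): 123,124,134,234,567 *)
Definition K43e : seq {set 'I_7} :=
  [:: tri 6 0 1 2; tri 6 0 1 3; tri 6 0 2 3; tri 6 1 2 3; tri 6 4 5 6].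

Definition K4on (k a b c d : nat) : seq {set 'I_k.+1} :=
  [:: tri k a b c; tri k a b d; tri k a c d; tri k b c d].

(* X_i on [2i+2]: {1,2,2j+1,2j+2} spans K_4^3 for 1<=j<=i (0-indexed: {0,1,2j,2j+1}) *)
Definition X (i : nat) : seq {set 'I_(2 * i).+2} :=
  flatten [seq K4on (2 * i).+1 0 1 (2 * j) (2 * j + 1) | j <- iota 1 i].

From HB Require Import structures.
From mathcomp Require Import classical_sets reals.
From mathcomp Require Import all_boot all_order all_algebra.
From mathcomp Require Import ring lra zify.
Import Order.TTheory GRing.Theory Num.Theory.
Set Implicit Arguments. Unset Strict Implicit. Unset Printing Implicit Defensive.
Local Open Scope ring_scope.

(* Let the copy of X_3 have centre {a, b} and pairs {c_j, d_j}. Every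
   {a, b, c_j, d_j} spans a K_4^3, so K_4^3 u e-freeness forces every edge to meet
   each of these three sets: an edge either meets {a, b} or picks one vertex from
   each pair. Give the ordered triples a nonnegative weight whose symmetrisation is
   at least 1 on such triples; the weighted triple sum then factorises into power
   sums, and bounds the Lagrangian polynomial by a polynomial in x_a + x_b, the three
   pair sums and the sum of squares outside {a, b}, whose maximum over the simplex
   is sqrt 3 / 18. This contradicts lambda(G) > sqrt 3 / 18. *)

Section RealFieldInequalities.
Variable R : realFieldType.
Implicit Types a b c s : R.

Lemma AGM3 a b c : 0 <= a -> 0 <= b -> 0 <= c -> 27 * (a * b * c) <= (a + b + c) ^+ 3.
Proof.
move=> a0 b0 c0; rewrite -subr_ge0.
have -> : (a + b + c) ^+ 3 - 27 * (a * b * c) =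
  (a + b + c) * ((a - b) ^+ 2 + (b - c) ^+ 2 + (c - a) ^+ 2) / 2
  + 3 * (b * (a - c) ^+ 2 + a * (b - c) ^+ 2 + c * (a - b) ^+ 2) by field.
have := sqr_ge0 (a - b); have := sqr_ge0 (b - c); have := sqr_ge0 (c - a).
have := sqr_ge0 (a - c) => ? ? ? ?.
apply: addr_ge0; first by apply: divr_ge0 => //; apply: mulr_ge0; lra.
by apply: mulr_ge0 => //; nra.
Qed.

Lemma triple_product_le a b c s : 0 <= a -> 0 <= b -> 0 <= c -> 0 <= s ->
  a * b * c - s * (a ^+ 2 + b ^+ 2 + c ^+ 2) / 4
  <= (a + b + c) ^+ 2 * ((a + b + c) / 27 - s / 12).
Proof.
move=> a0 b0 c0 s0; have := AGM3 a0 b0 c0.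
have : (a + b + c) ^+ 2 <= 3 * (a ^+ 2 + b ^+ 2 + c ^+ 2).
  have := sqr_ge0 (a - b); have := sqr_ge0 (b - c); have := sqr_ge0 (c - a); nra.
nra.
Qed.

End RealFieldInequalities.

Section Sqrt3Bounds.
Variable R : rcfType.
Implicit Types p s : R.

Lemma pair_poly_le_sqrt3 s : 0 <= s <= 1 ->
  s * (1 - s) ^+ 2 / 2 + s ^+ 2 * (1 - s) / 4 <= Num.sqrt 3 / 18.
Proof.
move=> /andP[s0 s1]; set r := Num.sqrt 3.
have r0 : 0 <= r by apply: sqrtr_ge0.
have r2 : r ^+ 2 = 3 by rewrite sqr_sqrtr.
rewrite -subr_ge0.
(* the maximum is attained at s = 1 - 1 / sqrt 3 *)
have -> : r / 18 - (s * (1 - s) ^+ 2 / 2 + s ^+ 2 * (1 - s) / 4) =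
  (s - (3 - r) / 3) ^+ 2 * (1 + 2 * r / 3 - s) / 4
  + (3 - r ^+ 2) * (s / 12 + (2 * r - 9) / 108) by field.
rewrite r2 subrr mul0r addr0.
by apply: divr_ge0 => //; apply: mulr_ge0; [apply: sqr_ge0 | lra].
Qed.

Lemma X3_cubic_le_sqrt3 s p : 0 <= s -> 0 <= p -> p <= 1 - s ->
  s * (1 - s) ^+ 2 / 2 + s ^+ 2 * (1 - s) / 4 + p ^+ 2 * (p / 27 - s / 12)
  <= Num.sqrt 3 / 18.
Proof.
move=> s0 p0 ps.
have hs : 0 <= s <= 1 by apply/andP; split; lra.
have := pair_poly_le_sqrt3 hs.
have [pl|pg] := lerP (p / 27) (s / 12).
  have : p ^+ 2 * (p / 27 - s / 12) <= 0 by apply: mulr_ge0_le0; [apply: sqr_ge0 | lra].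
  lra.
(* here s < 4/13, where the crude bound 1/11 < sqrt 3 / 18 already suffices *)
have s13 : 13 * s <= 4 by lra.
have : p ^+ 2 * (p / 27 - s / 12) <= (1 - s) ^+ 2 * ((1 - s) / 27 - s / 12).
  by apply: ler_pM; [apply: sqr_ge0 | lra | rewrite ler_sqr ?nnegrE; lra | lra].
have : s * (1 - s) ^+ 2 / 2 + s ^+ 2 * (1 - s) / 4 + (1 - s) ^+ 2 * ((1 - s) / 27 - s / 12)
  <= 1 / 11 by nra.
have : 18 / 11 <= Num.sqrt 3 :> R.
  rewrite -(@ler_pXn2r _ 2) ?nnegrE ?sqrtr_ge0 //; last lra.
  by rewrite sqr_sqrtr; lra.
lra.
Qed.

Lemma X3_poly_le_sqrt3 (xa xb q1 q2 q3 Qw : R) :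
  0 <= xa -> 0 <= xb -> 0 <= q1 -> 0 <= q2 -> 0 <= q3 ->
  q1 + q2 + q3 <= 1 - (xa + xb) -> (q1 ^+ 2 + q2 ^+ 2 + q3 ^+ 2) / 2 <= Qw ->
  (xa + xb) * ((1 - (xa + xb)) ^+ 2 - Qw) / 2
  + ((xa + xb) ^+ 2 - (xa ^+ 2 + xb ^+ 2)) * (1 - (xa + xb)) / 2
  + q1 * q2 * q3 <= Num.sqrt 3 / 18.
Proof.
move=> xa0 xb0 q10 q20 q30 qt hQw.
have s0 : 0 <= xa + xb by lra.
have := X3_cubic_le_sqrt3 s0 (addr_ge0 (addr_ge0 q10 q20) q30) qt.
have := triple_product_le q10 q20 q30 s0.
have : (xa + xb) * ((q1 ^+ 2 + q2 ^+ 2 + q3 ^+ 2) / 2) <= (xa + xb) * Qw by apply: ler_wpM2l.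
have : ((xa + xb) ^+ 2 - (xa ^+ 2 + xb ^+ 2)) * (1 - (xa + xb))
       <= (xa + xb) ^+ 2 * (1 - (xa + xb)) / 2.
  rewrite -subr_ge0; have -> : (xa + xb) ^+ 2 * (1 - (xa + xb)) / 2
     - ((xa + xb) ^+ 2 - (xa ^+ 2 + xb ^+ 2)) * (1 - (xa + xb))
     = (xa - xb) ^+ 2 * (1 - (xa + xb)) / 2 by field.
  by apply: divr_ge0 => //; apply: mulr_ge0; [apply: sqr_ge0 | lra].
lra.
Qed.

End Sqrt3Bounds.

Section Indicators.
Variable R : pzSemiRingType.
Implicit Types (b c : bool).

Lemma natr_andb b c : (b && c)%:R = b%:R * c%:R :> R.
Proof. by case: b; case: c; rewrite /= ?mulr0 ?mulr1. Qed.

Lemma natr_bool_idem b : b%:R * b%:R = b%:R :> R.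
Proof. by case: b; rewrite /= ?mulr0 ?mulr1. Qed.

End Indicators.

Lemma natr_negb (R : pzRingType) (b : bool) : (~~ b)%:R = 1 - b%:R :> R.
Proof. by case: b; rewrite /= ?subr0 ?subrr. Qed.

Lemma sum_natr_mem (T : finType) (R : pzSemiRingType) (A : {set T}) (y : T -> R) :
  \sum_i (i \in A)%:R * y i = \sum_(i in A) y i.
Proof. by rewrite [RHS]big_mkcond; apply: eq_bigr => i _; case: (i \in A); rewrite ?mul1r ?mul0r. Qed.

Section TripleSums.
Variables (T : finType) (R : comNzRingType).
Implicit Types (x y f g h : T -> R) (F G : T -> T -> T -> R).

Definition tsum F : R := \sum_i \sum_j \sum_k F i j k.

Definition mon3 x i j k : R := x i * x j * x k.

Definition sym3 F i j k : R := F i j k + F i k j + F j i k + F j k i + F k i j + F k j i.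

Lemma eq_tsum F G : (forall i j k, F i j k = G i j k) -> tsum F = tsum G.
Proof. by move=> FG; do 3![apply: eq_bigr => ? _]. Qed.

Lemma tsumD F G : tsum (fun i j k => F i j k + G i j k) = tsum F + tsum G.
Proof. by rewrite /tsum -big_split; do 2![apply: eq_bigr => ? _; rewrite -big_split]. Qed.

Lemma tsumZ c F : tsum (fun i j k => c * F i j k) = c * tsum F.
Proof. by rewrite /tsum mulr_sumr; do 2![apply: eq_bigr => ? _; rewrite mulr_sumr]. Qed.

Lemma exchange_tsum12 F : tsum F = tsum (fun i j k => F j i k).
Proof. by rewrite /tsum exchange_big. Qed.

Lemma exchange_tsum23 F : tsum F = tsum (fun i j k => F i k j).
Proof. by apply: eq_bigr => i _; rewrite exchange_big. Qed.

Lemma tsum_sum (I : finType) (P : {pred I}) (F : I -> T -> T -> T -> R) :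
  \sum_(e in P) tsum (F e) = tsum (fun i j k => \sum_(e in P) F e i j k).
Proof.
rewrite /tsum exchange_big; apply: eq_bigr => i _; rewrite exchange_big.
by apply: eq_bigr => j _; rewrite exchange_big.
Qed.

Lemma tsum_mon3_sym3 x F :
  tsum (fun i j k => mon3 x i j k * sym3 F i j k) = 6 * tsum (fun i j k => mon3 x i j k * F i j k).
Proof.
rewrite (@eq_tsum _ (fun i j k =>
   mon3 x i j k * F i j k + mon3 x i j k * F i k j + mon3 x i j k * F j i k
 + mon3 x i j k * F j k i + mon3 x i j k * F k i j + mon3 x i j k * F k j i));
  last by move=> i j k; rewrite /sym3; ring.
rewrite !tsumD; set S := tsum (fun i j k => mon3 x i j k * F i j k).
have -> : tsum (fun i j k => mon3 x i j k * F i k j) = S.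
  by rewrite exchange_tsum23; apply: eq_tsum => i j k; rewrite /mon3; ring.
have -> : tsum (fun i j k => mon3 x i j k * F j i k) = S.
  by rewrite exchange_tsum12; apply: eq_tsum => i j k; rewrite /mon3; ring.
have -> : tsum (fun i j k => mon3 x i j k * F j k i) = S.
  by rewrite exchange_tsum12 exchange_tsum23; apply: eq_tsum => i j k; rewrite /mon3; ring.
have -> : tsum (fun i j k => mon3 x i j k * F k i j) = S.
  by rewrite exchange_tsum23 exchange_tsum12; apply: eq_tsum => i j k; rewrite /mon3; ring.
have -> : tsum (fun i j k => mon3 x i j k * F k j i) = S.
  by rewrite exchange_tsum12 exchange_tsum23 exchange_tsum12; apply: eq_tsum => i j k; rewrite /mon3; ring.
ring.
Qed.

Lemma tsum_mul f g h :
  tsum (fun i j k => f i * g j * h k) = (\sum_i f i) * (\sum_i g i) * (\sum_i h i).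
Proof.
rewrite /tsum -mulrA mulr_suml; apply: eq_bigr => i _.
rewrite mulr_suml mulr_sumr; apply: eq_bigr => j _.
by rewrite mulrA mulr_sumr.
Qed.

Lemma tsum_mull f (G : T -> T -> R) :
  tsum (fun i j k => f i * G j k) = (\sum_i f i) * \sum_j \sum_k G j k.
Proof. by rewrite /tsum mulr_suml; apply: eq_bigr => i _; rewrite mulr_sumr; apply: eq_bigr => j _; rewrite mulr_sumr. Qed.

Lemma tsum_mulr (G : T -> T -> R) h :
  tsum (fun i j k => G i j * h k) = (\sum_i \sum_j G i j) * \sum_k h k.
Proof. by rewrite /tsum mulr_suml; apply: eq_bigr => i _; rewrite mulr_suml; apply: eq_bigr => j _; rewrite mulr_sumr. Qed.

Lemma sum_offdiag y : \sum_j \sum_k y j * y k * (j != k)%:R = (\sum_i y i) ^+ 2 - \sum_i y i ^+ 2.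
Proof.
rewrite expr2 mulr_suml -sumrB; apply: eq_bigr => j _.
rewrite mulr_sumr (bigD1 j) //= eqxx mulr0 add0r [in RHS](bigD1 j) //= addrAC -expr2 subrr add0r.
by apply: eq_bigr => k; rewrite eq_sym => ->; rewrite mulr1.
Qed.

End TripleSums.

Section ThreeSets.
Variable T : finType.
Implicit Types (e : {set T}) (i j k u v w : T).

Lemma cards3_set e : #|e| = 3%N ->
  exists u v w, [/\ u != v, u != w, v != w & e = [set u; v; w]].
Proof.
move=> e3; have [u eu] : exists u, u \in e by apply/card_gt0P; rewrite e3.
have /cards2P[v [w [vw evw]]] : #|e :\ u| == 2%N.
  by move: e3; rewrite (cardsD1 u) eu add1n => -[->].
have : (v \in e :\ u) && (w \in e :\ u) by rewrite evw !inE !eqxx orbT.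
rewrite !inE => /andP[/andP[vu _] /andP[wu _]].
exists u, v, w; split; try by rewrite // eq_sym.
by rewrite -(setD1K eu) evw; apply/setP => y; rewrite !inE orbA.
Qed.

Lemma cards3 u v w : uniq [:: u; v; w] -> #|[set u; v; w]| = 3%N.
Proof.
rewrite /= !inE negb_or andbT => /andP[/andP[uv uw] vw].
by rewrite setUC cardsU1 cards2 uv !inE negb_or !(eq_sym w) uw vw.
Qed.

Lemma subset3_eq e i j k : #|e| = 3%N -> uniq [:: i; j; k] ->
  [&& i \in e, j \in e & k \in e] = (e == [set i; j; k]).
Proof.
move=> e3 ijk; apply/idP/eqP => [/and3P[ie je ke] | ->]; last by rewrite !inE !eqxx !orbT.
apply/eqP; rewrite eq_sym eqEcard e3 cards3 // leqnn andbT.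
by apply/subsetP => y; rewrite !inE => /orP[/orP[]|] /eqP ->.
Qed.

End ThreeSets.

Section EdgePolynomial.
Variables (T : finType) (R : comNzRingType).
Implicit Types (x : T -> R) (e : {set T}) (E : {set {set T}}).

Lemma card3_prod_tsum x e : #|e| = 3%N ->
  6 * \prod_(i in e) x i =
  tsum (fun i j k => ([&& i \in e, j \in e & k \in e] && uniq [:: i; j; k])%:R * mon3 x i j k).
Proof.
case/cards3_set => u [v [w [uv uw vw ->]]].
have wuv : w \notin [set u; v] by rewrite !inE negb_or !(eq_sym w) uw vw.
have sum_uvw (F : T -> R) : \sum_(i in [set u; v; w]) F i = F u + F v + F w.
  by rewrite setUC big_setU1 // big_setU1 ?big_set1 ?inE //= [LHS]addrC.
have -> : \prod_(i in [set u; v; w]) x i = x u * x v * x w.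
  by rewrite setUC big_setU1 // big_setU1 ?big_set1 ?inE //= [LHS]mulrC.
transitivity (\sum_(i in [set u; v; w]) \sum_(j in [set u; v; w]) \sum_(k in [set u; v; w])
                (uniq [:: i; j; k])%:R * mon3 x i j k).
  have [vu wu wv] : [/\ v != u, w != u & w != v] by rewrite !(eq_sym _ u) (eq_sym w) uv uw vw.
  rewrite !sum_uvw /= !inE !eqxx (negbTE uv) (negbTE uw) (negbTE vw) (negbTE vu) (negbTE wu) (negbTE wv) /mon3 /=.
  ring.
rewrite /tsum -sum_natr_mem; apply: eq_bigr => i _.
rewrite -sum_natr_mem mulr_sumr; apply: eq_bigr => j _.
rewrite -sum_natr_mem !mulr_sumr; apply: eq_bigr => k _.
by rewrite !natr_andb; ring.
Qed.

Lemma edge_sum_tsum x E : {in E, forall e, #|e| = 3%N} ->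
  6 * \sum_(e in E) \prod_(i in e) x i =
  tsum (fun i j k => (([set i; j; k] \in E) && uniq [:: i; j; k])%:R * mon3 x i j k).
Proof.
move=> E3; rewrite mulr_sumr (eq_bigr _ (fun e ee => card3_prod_tsum x (E3 e ee))) tsum_sum.
apply: eq_tsum => i j k; rewrite -big_distrl; congr (_ * _).
have [ijk|_] := boolP (uniq [:: i; j; k]); last first.
  by rewrite andbF big1 // => e _; rewrite andbF.
rewrite andbT (eq_bigr (fun e => (e == [set i; j; k])%:R)); last first.
  by move=> e ee; rewrite andbT subset3_eq // E3.
have [SE|SnE] := boolP ([set i; j; k] \in E).
  by rewrite (bigD1 [set i; j; k]) //= eqxx big1 ?addr0 // => e /andP[_ /negbTE ->].
by rewrite big1 // => e ee; case: eqP => // eS; rewrite -eS ee in SnE.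
Qed.

End EdgePolynomial.

Section WeightBound.
Variables (T : finType) (R : numDomainType).
Implicit Types (x : T -> R) (F G : T -> T -> T -> R) (e : {set T}) (E : {set {set T}}).

Lemma ler_tsum F G : (forall i j k, F i j k <= G i j k) -> tsum F <= tsum G.
Proof. by move=> FG; do 3![apply: ler_sum => ? _]. Qed.

(* 6 times the monomial of an edge is the sum of mon3 x over its 6 orderings. *)
Lemma edge_sum_le_weight x E F :
  {in E, forall e, #|e| = 3%N} -> (forall i, 0 <= x i) -> (forall i j k, 0 <= F i j k) ->
  (forall i j k, uniq [:: i; j; k] -> [set i; j; k] \in E -> 1 <= sym3 F i j k) ->
  \sum_(e in E) \prod_(i in e) x i <= tsum (fun i j k => mon3 x i j k * F i j k).
Proof.
move=> E3 x0 F0 F1; rewrite -(ler_pM2l (_ : 0 < 6)) // edge_sum_tsum // -tsum_mon3_sym3.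
apply: ler_tsum => i j k; rewrite mulrC; apply: ler_wpM2l; first by rewrite /mon3 !mulr_ge0.
case: andP => [[SE ijk] | _]; first exact: F1.
by rewrite /sym3 !addr_ge0.
Qed.

End WeightBound.

Section X3Weights.
Variables (T : finType) (R : realFieldType).
Implicit Types (x : T -> R) (A P Q S : {set T}) (i j k : T).

Definition pair_weight A i j k : R :=
  (i \in A)%:R * (j \notin A)%:R * (k \notin A)%:R * (j != k)%:R / 2
  + (i \in A)%:R * (j \in A)%:R * (k \notin A)%:R * (i != j)%:R / 2.

Definition transversal_weight P Q S i j k : R := (i \in P)%:R * (j \in Q)%:R * (k \in S)%:R.

Lemma pair_weight_ge0 A i j k : 0 <= pair_weight A i j k.
Proof. by rewrite /pair_weight addr_ge0 // divr_ge0 // !mulr_ge0. Qed.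

Lemma transversal_weight_ge0 P Q S i j k : 0 <= transversal_weight P Q S i j k.
Proof. by rewrite /transversal_weight !mulr_ge0. Qed.

Lemma sym3_pair_weight_ge1 A i j k : (#|A| < 3)%N -> uniq [:: i; j; k] ->
  [|| i \in A, j \in A | k \in A] -> 1 <= sym3 (pair_weight A) i j k.
Proof.
move=> A3 ijk hit.
have notA3 : ~~ [&& i \in A, j \in A & k \in A].
  apply: contraL A3 => /and3P[iA jA kA]; rewrite -leqNgt -(cards3 ijk).
  by apply: subset_leq_card; apply/subsetP => y; rewrite !inE => /orP[/orP[]|] /eqP ->.
move: ijk; rewrite /= !inE negb_or andbT => /andP[/andP[ij ik] jk].
rewrite /sym3 /pair_weight ij ik jk !(eq_sym j i) !(eq_sym k i) !(eq_sym k j) ij ik jk.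
by move: notA3 hit; case: (i \in A); case: (j \in A); case: (k \in A) => //= _ _; lra.
Qed.

Lemma sym3_transversal_weight_ge1 P Q S i j k :
  [disjoint P & Q] -> [disjoint P & S] -> [disjoint Q & S] ->
  [|| i \in P, j \in P | k \in P] -> [|| i \in Q, j \in Q | k \in Q] ->
  [|| i \in S, j \in S | k \in S] -> 1 <= sym3 (transversal_weight P Q S) i j k.
Proof.
have disj (A B : {set T}) y : [disjoint A & B] -> (y \in A) && (y \in B) = false.
  by move=> AB; apply/andP => -[yA]; rewrite (disjointFr AB yA).
move=> /disj d12 /disj d13 /disj d23.
move: (d12 i) (d12 j) (d12 k) (d13 i) (d13 j) (d13 k) (d23 i) (d23 j) (d23 k).
rewrite /sym3 /transversal_weight.
case: (i \in P); case: (j \in P); case: (k \in P);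
case: (i \in Q); case: (j \in Q); case: (k \in Q);
case: (i \in S); case: (j \in S); case: (k \in S) => //= *; lra.
Qed.

Lemma tsum_transversal_weight x P Q S :
  tsum (fun i j k => mon3 x i j k * transversal_weight P Q S i j k)
  = (\sum_(i in P) x i) * (\sum_(i in Q) x i) * (\sum_(i in S) x i).
Proof.
rewrite -!sum_natr_mem -tsum_mul; apply: eq_tsum => i j k.
by rewrite /mon3 /transversal_weight; ring.
Qed.

Lemma tsum_pair_weight x A :
  tsum (fun i j k => mon3 x i j k * pair_weight A i j k)
  = ((\sum_(i in A) x i) * ((\sum_(i in ~: A) x i) ^+ 2 - \sum_(i in ~: A) x i ^+ 2)
     + ((\sum_(i in A) x i) ^+ 2 - \sum_(i in A) x i ^+ 2) * \sum_(i in ~: A) x i) / 2.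
Proof.
pose y (B : {set T}) i := (i \in B)%:R * x i.
have y_sqr (B : {set T}) i : y B i ^+ 2 = (i \in B)%:R * x i ^+ 2 by rewrite exprMn expr2 natr_bool_idem.
rewrite (@eq_tsum _ _ _ (fun i j k => 2^-1 * (y A i * (y (~: A) j * y (~: A) k * (j != k)%:R))
                                + 2^-1 * (y A i * y A j * (i != j)%:R * y (~: A) k))); last first.
  by move=> i j k; rewrite /mon3 /pair_weight /y !inE; ring.
rewrite tsumD !tsumZ tsum_mull tsum_mulr !sum_offdiag.
under [\sum_i y (~: A) i ^+ 2]eq_bigr do rewrite y_sqr.
under [\sum_i y A i ^+ 2]eq_bigr do rewrite y_sqr.
rewrite /y !sum_natr_mem; ring.
Qed.

End X3Weights.

Section SubsetSums.
Variables (T : finType) (R : numDomainType).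
Implicit Types (A B P Q S : {set T}) (f : T -> R).

Lemma ler_sum_subset (A B : {pred T}) f : A \subset B -> (forall i, 0 <= f i) ->
  \sum_(i in A) f i <= \sum_(i in B) f i.
Proof.
move=> AB f0; rewrite [leRHS](bigID (mem A)) /=.
have -> : \sum_(i in B | i \in A) f i = \sum_(i in A) f i.
  by apply: eq_bigl => i; rewrite andbC; apply/andb_idr => /(subsetP AB).
by rewrite lerDl sumr_ge0.
Qed.

Lemma ler_sum_disjoint3 P Q S B f :
  [disjoint P & Q] -> [disjoint P & S] -> [disjoint Q & S] ->
  P \subset B -> Q \subset B -> S \subset B -> (forall i, 0 <= f i) ->
  \sum_(i in P) f i + \sum_(i in Q) f i + \sum_(i in S) f i <= \sum_(i in B) f i.
Proof.
move=> PQ PS QS PB QB SB f0; rewrite -!bigU ?disjointU ?PS ?QS //.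
apply: ler_sum_subset => //; apply/subsetP => i; rewrite !inE.
by case/orP=> [/orP[]|]; apply: subsetP.
Qed.

End SubsetSums.

Lemma meets_set3 (T : finType) (B : {set T}) (i j k : T) :
  ~~ [disjoint [set i; j; k] & B] = [|| i \in B, j \in B | k \in B].
Proof. by rewrite disjoints_subset !subUset !sub1set !inE !negb_and !negbK -orbA. Qed.

Section X3Bound.
Variables (R : rcfType) (T : finType).
Implicit Types (x : T -> R) (A P Q S e : {set T}) (E : {set {set T}}).

Lemma sum_pair_sqr_le x P : #|P| = 2%N -> (\sum_(i in P) x i) ^+ 2 <= 2 * \sum_(i in P) x i ^+ 2.
Proof.
case/eqP/cards2P => c [d [cd ->]]; rewrite !big_setU1 ?big_set1 ?inE //=.
by have := sqr_ge0 (x c - x d); lra.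
Qed.

Lemma X3_edge_sum_le_sqrt3 A P Q S E x :
  #|A| = 2%N -> #|P| = 2%N -> #|Q| = 2%N -> #|S| = 2%N ->
  [disjoint A & P] -> [disjoint A & Q] -> [disjoint A & S] ->
  [disjoint P & Q] -> [disjoint P & S] -> [disjoint Q & S] ->
  {in E, forall e, #|e| = 3%N} ->
  {in E, forall e, ~~ [disjoint e & A :|: P]} ->
  {in E, forall e, ~~ [disjoint e & A :|: Q]} ->
  {in E, forall e, ~~ [disjoint e & A :|: S]} ->
  (forall i, 0 <= x i) -> \sum_i x i = 1 ->
  \sum_(e in E) \prod_(i in e) x i <= Num.sqrt 3 / 18.
Proof.
move=> A2 P2 Q2 S2 AP AQ AS PQ PS QS E3 EP EQ ES x0 x1.
pose F i j k := pair_weight R A i j k + transversal_weight R P Q S i j k.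
have F0 i j k : 0 <= F i j k by rewrite addr_ge0 ?pair_weight_ge0 ?transversal_weight_ge0.
have F1 i j k : uniq [:: i; j; k] -> [set i; j; k] \in E -> 1 <= sym3 F i j k.
  move=> ijk ijkE.
  have -> : sym3 F i j k = sym3 (pair_weight R A) i j k + sym3 (transversal_weight R P Q S) i j k.
    by rewrite /sym3 /F; ring.
  have sym3_ge0 G : (forall i j k, 0 <= G i j k) -> 0 <= sym3 G i j k :> R.
    by move=> G0; rewrite /sym3 !addr_ge0.
  have [hitA|missA] := boolP [|| i \in A, j \in A | k \in A].
    have := sym3_ge0 _ (transversal_weight_ge0 R P Q S).
    have := sym3_pair_weight_ge1 R (_ : (#|A| < 3)%N) ijk hitA; rewrite A2 => /(_ isT); lra.
  have hit B : ~~ [disjoint [set i; j; k] & A :|: B] -> [|| i \in B, j \in B | k \in B].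
    by rewrite meets_set3 !inE; move: missA; case: (i \in A); case: (j \in A); case: (k \in A).
  have := sym3_ge0 _ (pair_weight_ge0 R A).
  have := sym3_transversal_weight_ge1 R PQ PS QS (hit _ (EP _ ijkE)) (hit _ (EQ _ ijkE)) (hit _ (ES _ ijkE)).
  lra.
apply: le_trans (edge_sum_le_weight E3 x0 F0 F1) _.
rewrite (@eq_tsum _ _ _ (fun i j k => mon3 x i j k * pair_weight R A i j k
                                    + mon3 x i j k * transversal_weight R P Q S i j k)); last first.
  by move=> i j k; rewrite mulrDr.
rewrite tsumD tsum_pair_weight tsum_transversal_weight.
have [a [b [ab Aab]]] := cards2P _ (introT eqP A2).
have sumA (f : T -> R) : \sum_(i in A) f i = f a + f b by rewrite Aab big_setU1 ?big_set1 ?inE.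
have sumC : \sum_(i in ~: A) x i = 1 - (x a + x b).
  by rewrite -sumA -x1 -!sum_natr_mem -sumrB; apply: eq_bigr => i _; rewrite inE natr_negb; ring.
have subC (B : {set T}) : [disjoint A & B] -> B \subset ~: A.
  by rewrite -disjoints_subset disjoint_sym.
have sum_le (f : T -> R) : (forall i, 0 <= f i) ->
    \sum_(i in P) f i + \sum_(i in Q) f i + \sum_(i in S) f i <= \sum_(i in ~: A) f i.
  by apply: ler_sum_disjoint3; rewrite ?subC.
have q_le := sum_le _ x0.
have Qw_le := sum_le _ (fun i => sqr_ge0 (x i)).
have := sum_pair_sqr_le x P2; have := sum_pair_sqr_le x Q2; have := sum_pair_sqr_le x S2.
move=> sqS sqQ sqP.
have hQw : ((\sum_(i in P) x i) ^+ 2 + (\sum_(i in Q) x i) ^+ 2 + (\sum_(i in S) x i) ^+ 2) / 2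
           <= \sum_(i in ~: A) x i ^+ 2 by lra.
rewrite sumC in q_le.
have := X3_poly_le_sqrt3 (x0 a) (x0 b) (sumr_ge0 _ (fun i _ => x0 i)) (sumr_ge0 _ (fun i _ => x0 i))
          (sumr_ge0 _ (fun i _ => x0 i)) q_le hQw.
rewrite !sumA sumC; lra.
Qed.

End X3Bound.

Section LagrangianBound.
Variables (R : realType) (n : nat).
Implicit Types (E : {set {set 'I_n}}) (x : 'I_n -> R).

Lemma lambda_le E (c : R) (i0 : 'I_n) :
  (forall x, (forall i, 0 <= x i) -> \sum_i x i = 1 -> \sum_(e in E) \prod_(i in e) x i <= c) ->
  lambda R E <= c.
Proof.
move=> bound; rewrite /lambda /lagr; apply: ge_sup => [|_ [x [x0 [_ [x1 ->]]]]]; last exact: bound.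
exists (\sum_(e in E) \prod_(i in e) ((i == i0)%:R : R)), (fun i => (i == i0)%:R).
do !split => //; first by move=> i; rewrite inE.
by rewrite (bigD1 i0) //= eqxx big1 ?addr0 // => i /negbTE ->.
Qed.

End LagrangianBound.

Lemma imset_tri n k (f : 'I_k.+1 -> 'I_n) p q r :
  f @: tri k p q r = [set f (inord p); f (inord q); f (inord r)].
Proof. by rewrite /tri !imsetU !imset_set1. Qed.

Lemma K4on_sub_X i j : (1 <= j <= i)%N -> {subset K4on (2 * i).+1 0 1 (2 * j) (2 * j + 1) <= X i}.
Proof. by move=> ji t tK; apply/flatten_mapP; exists j => //; rewrite mem_iota add1n ltnS. Qed.

Lemma K43e_free_K4_meets_edge n (E : {set {set 'I_n}}) (a b c d : 'I_n) :
  uniform3 E -> hfree E K43e -> uniq [:: a; b; c; d] ->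
  [set a; b; c] \in E -> [set a; b; d] \in E -> [set a; c; d] \in E -> [set b; c; d] \in E ->
  {in E, forall e : {set 'I_n}, ~~ [disjoint e & [set a; b] :|: [set c; d]]}.
Proof.
move=> E3 free abcd abc abd acd bcd e eE; apply/negP => eK; apply: free.
have [u [v [w [uv uw vw euvw]]]] := cards3_set (E3 e eE).
have notK y : y \in e -> y \notin [:: a; b; c; d].
  by move=> ye; have := disjointFr eK ye; rewrite !inE -!orbA => ->.
pose s := [:: a; b; c; d; u; v; w].
have /notK uK : u \in e by rewrite euvw !inE eqxx.
have /notK vK : v \in e by rewrite euvw !inE eqxx orbT.
have /notK wK : w \in e by rewrite euvw !inE eqxx orbT.
have s_uniq : uniq s.
  move: uK vK wK; rewrite (cat_uniq [:: a; b; c; d] [:: u; v; w]) abcd /= !inE orbF.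
  rewrite !negb_or uv uw vw.
  by move=> /and4P[-> -> -> ->] /and4P[-> -> -> ->] /and4P[-> -> -> ->].
exists (fun i : 'I_7 => nth a s i); split.
  by move=> i j /eqP; rewrite nth_uniq // => /eqP /val_inj.
move=> t; rewrite /K43e !inE.
by case/or4P=> [|||/orP[]] /eqP ->; rewrite imset_tri !inordK //= -euvw.
Qed.

Lemma inj_inord_eq n k (f : 'I_k.+1 -> 'I_n) p q : injective f -> (p <= k)%N -> (q <= k)%N ->
  (f (inord p) == f (inord q)) = (p == q).
Proof.
by move=> f_inj pk qk; rewrite (inj_eq f_inj); apply/eqP/eqP => [/(congr1 val)|->] //=; rewrite !inordK.
Qed.

Lemma X_K4_meets_edge n i (E : {set {set 'I_n}}) (f : 'I_(2 * i).+2 -> 'I_n) j :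
  uniform3 E -> hfree E K43e -> injective f -> (forall t, t \in X i -> f @: t \in E) ->
  (1 <= j <= i)%N ->
  {in E, forall e : {set 'I_n}, ~~ [disjoint e & [set f (inord 0); f (inord 1)]
                                     :|: [set f (inord (2 * j)); f (inord (2 * j + 1))]]}.
Proof.
move=> E3 free f_inj fX j1i.
have edge p q r : tri (2 * i).+1 p q r \in K4on (2 * i).+1 0 1 (2 * j) (2 * j + 1) ->
    [set f (inord p); f (inord q); f (inord r)] \in E.
  by move/(K4on_sub_X j1i)/fX; rewrite imset_tri.
apply: K43e_free_K4_meets_edge => //; try by apply: edge; rewrite !inE eqxx ?orbT.
rewrite /= !inE !negb_or !inj_inord_eq //; lia.
Qed.

Theorem lemma5p11 (R : realType) (n : nat) (E : {set {set 'I_n}}) :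
  uniform3 E -> dense R E -> hfree E K43e ->
  Num.sqrt 3 / 18 < lambda R E ->
  hfree E (X 3).
Proof.
move=> E3 _ free; apply: contraTnot => -[f [f_inj fX]]; rewrite -leNgt.
pose v i : 'I_n := f (inord i).
have v_eq p q : (p <= 7)%N -> (q <= 7)%N -> (v p == v q) = (p == q) by exact: inj_inord_eq.
have K4 j := X_K4_meets_edge (j := j) E3 free f_inj fX.
apply: (lambda_le (v 0)) => x x0 x1.
apply: (X3_edge_sum_le_sqrt3 (A := [set v 0; v 1]) (P := [set v 2; v 3]) (Q := [set v 4; v 5])
  (S := [set v 6; v 7]) _ _ _ _ _ _ _ _ _ _ E3 (K4 1%N isT) (K4 2%N isT) (K4 3%N isT) x0 x1).
1-4: by rewrite cards2 v_eq.
1-6: by rewrite disjoints_subset !subUset !sub1set !inE !negb_or !v_eq.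
Qed.
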